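(* Let $c\ge1$, let $G$ be a multigraph with vertex set $V(G)=S\cup\mathcal{T}$ where $S\cap\mathcal{T}=\emptyset$ and $\mathcal{T}$ is the terminal set, and let $X\subseteq S$ be connectivity-$c$ linked in $G$. Then $G/X$ is a connectivity-$c$ mimicking network for $(G,\mathcal{T})$.
   Context: For disjoint vertex sets $A,B$, $E_G(A,B)$ is the set of edges with one endpoint in $A$ and the other in $B$; for $Y\subseteq V(G)$, $\partial(Y)=E_G(Y,V(G)\setminus Y)$. $\mathrm{mincut}_G(A,B)$ is the minimum number of edges whose removal leaves no path between $A$ and $B$ ($0$ if either set is empty), and $\mathrm{mincut}^c_G(A,B)=\min\{\mathrm{mincut}_G(A,B),c\}$. A multigraph $H$ is a connectivity-$c$ mimicking network for $(G,\mathcal{T})$ if $V(H)$ contains a copy of each terminal and $\mathrm{mincut}^c_H(A,B)=\mathrm{mincut}^c_G(A,B)$ for all disjoint $A,B\subseteq\mathcal{T}$. A set $X\subseteq S$ is connectivity-$c$ linked in $G$ if for every pair of disjoint sets $A,B$ with $A\cup B=X$ we have $|E_G(A,B)|\ge \min\big(|\partial(A)\cap\partial(X)|,\ |\partial(B)\cap\partial(X)|,\ c\big)$. $G/X$ denotes the multigraph obtained from $G$ by contracting all edges of $G[X]$ (identifying $X$ into a single vertex, deleting self-loops and keeping parallel edges). *)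

From mathcomp Require Import all_boot.
Set Implicit Arguments. Unset Strict Implicit. Unset Printing Implicit Defensive.

(* A finite multigraph on vertex type V: a finite type of edges, each with two
   endpoints (parallel edges allowed; self-loops allowed but irrelevant). *)
Record multigraph (V : finType) := Multigraph {
  edge : finType;
  src : edge -> V;
  tgt : edge -> V }.

Section Defs.
Variable V : finType.
Implicit Types (G : multigraph V) (A B Y X T : {set V}).

Definition E_G G A B : {set edge G} :=
  [set e | ((src e \in A) && (tgt e \in B)) || ((src e \in B) && (tgt e \in A))].

Definition bnd G Y : {set edge G} := E_G G Y (~: Y).

Definition adj G (F : {set edge G}) : rel V := fun x y =>
  [exists e : edge G, (e \notin F) &&
     (((src e == x) && (tgt e == y)) || ((src e == y) && (tgt e == x)))].

Definition separates G (F : {set edge G}) A B : bool :=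
  [forall a, forall b, (a \in A) ==> (b \in B) ==> ~~ connect (adj F) a b].

(* mincut_G(A,B): minimum number of edges whose removal separates A from B
   (0 if A or B is empty, since F = set0 then separates) *)
Definition mincut G A B : nat :=
  \big[minn/#|edge G|]_(F : {set edge G} | separates F A B) #|F|.

Definition mincutc (c : nat) G A B : nat := minn (mincut G A B) c.

Definition linked (c : nat) G X : Prop :=
  forall A B, [disjoint A & B] -> A :|: B = X ->
    minn (minn #|bnd G A :&: bnd G X| #|bnd G B :&: bnd G X|) c <= #|E_G G A B|.

End Defs.

(* H (on vertex type W) is a connectivity-c mimicking network for (G,T),
   where phi maps each terminal to its copy in V(H). *)
Definition mimicking (V W : finType) (c : nat) (G : multigraph V) (T : {set V})
    (H : multigraph W) (phi : V -> W) : Prop :=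
  {in T &, injective phi} /\
  forall A B : {set V}, A \subset T -> B \subset T -> [disjoint A & B] ->
    mincutc c H (phi @: A) (phi @: B) = mincutc c G A B.

(* G/X: vertices are the vertices outside X plus one new vertex (None) for X;
   the edges of G[X] are deleted, all other edges kept with endpoints mapped. *)
Definition cvert (V : finType) (X : {set V}) : finType := option {v : V | v \notin X}.

Definition cmap (V : finType) (X : {set V}) (v : V) : cvert X := insub v.

Definition cedge (V : finType) (G : multigraph V) (X : {set V}) : finType :=
  {e : edge G | ~~ ((src e \in X) && (tgt e \in X))}.

Definition contract (V : finType) (G : multigraph V) (X : {set V}) : multigraph (cvert X) :=
  @Multigraph (cvert X) (cedge G X)
    (fun e => cmap X (src (val e))) (fun e => cmap X (tgt (val e))).

From mathcomp Require Import all_boot zify.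
Set Implicit Arguments. Unset Strict Implicit. Unset Printing Implicit Defensive.

(** An edge set separating the terminals in [G/X] still separates them
    in [G], so [mincut G <= mincut (G/X)]; the work is the converse.  Given
    a cut [F] of [G] separating [A] from [B], let [R] be the set of vertices
    reachable from [A] in [G - F]; then [bnd R] is a cut inside [F].
    Splitting [X] into [P = X ∩ R] and [Q = X \ R] and counting edges gives
    [|bnd (R ∪ X)| + |E(P,Q)| <= |bnd R| + |bnd Q ∩ bnd X|], and symmetrically
    for [R \ X] and [P].  Linkedness of [X] makes [|E(P,Q)|] at least the
    minimum of the last terms and [c], so one of [R ∪ X], [R \ X] — both
    unions of classes of [G/X] — has boundary at most [|F|], unless [|F| >= c]. *)

Lemma geq_bigmin_cond (I : finType) (P : pred I) (F : I -> nat) d i0 :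
  P i0 -> \big[minn/d]_(i | P i) F i <= F i0.
Proof.
move=> Pi0; have : i0 \in index_enum I by rewrite mem_index_enum.
elim: (index_enum I) => [|j r IHr] //; rewrite inE big_cons => /orP[/eqP<-|/IHr].
  by rewrite Pi0 geq_minl.
by case: (P j) => // le_r; exact: leq_trans (geq_minr _ _) le_r.
Qed.

Lemma leq_bigmin (I : finType) (P : pred I) (F : I -> nat) d n :
  n <= d -> (forall i, P i -> n <= F i) -> n <= \big[minn/d]_(i | P i) F i.
Proof.
move=> le_nd le_nF; apply: (big_ind (leq n)) => // x y.
by rewrite leq_min => -> ->.
Qed.

Lemma disjointP (T : finType) (A B : {pred T}) :
  reflect (forall x, x \in A -> x \in B -> False) [disjoint A & B].
Proof.
apply: (iffP pred0P) => [dAB x xA xB | nAB x /=]; first by have := dAB x; rewrite /= xA xB.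
by apply/negP => /andP[/nAB].
Qed.

Lemma homo_connect (T U : finType) (e : rel T) (e' : rel U) (f : T -> U) x y :
  (forall x y, e x y -> connect e' (f x) (f y)) ->
  connect e x y -> connect e' (f x) (f y).
Proof.
move=> homo_f /connectP[p e_p ->]; elim: p x e_p => //= z p IHp x /andP[e_xz e_p].
exact: connect_trans (homo_f _ _ e_xz) (IHp _ e_p).
Qed.

Section Cuts.
Variables (V : finType) (G : multigraph V).
Implicit Types (A B R : {set V}) (F : {set edge G}).

Lemma mincut_le F A B : separates F A B -> mincut G A B <= #|F|.
Proof. exact: (geq_bigmin_cond (fun F => #|F|)). Qed.

Lemma separates_setT A B : [disjoint A & B] -> separates [set: edge G] A B.
Proof.
move=> dAB; apply/'forall_forallP => a b; apply/implyP => aA; apply/implyP => bB.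
apply/negP => /connectP[[|z p] /= e_p eq_ab].
  by rewrite eq_ab (disjointFr dAB aA) in bB.
by case/andP: e_p => /existsP[e]; rewrite inE.
Qed.

Lemma mincut_ge n A B :
  [disjoint A & B] -> (forall F, separates F A B -> n <= #|F|) ->
  n <= mincut G A B.
Proof.
move=> dAB le_nF; apply: leq_bigmin => //.
by rewrite -cardsT; apply/le_nF/separates_setT.
Qed.

Lemma adj_sym F : symmetric (adj F).
Proof.
move=> x y; apply/existsP/existsP => -[e /andP[eF end_e]];
by exists e; rewrite eF orbC.
Qed.

Lemma adj_notin F e :
  e \notin F -> adj F (src e) (tgt e) && adj F (tgt e) (src e).
Proof.
by move=> eF; rewrite adj_sym andbb; apply/existsP; exists e; rewrite eF !eqxx orbT.
Qed.

Lemma separates_bnd A B R :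
  A \subset R -> [disjoint R & B] -> separates (bnd G R) A B.
Proof.
move=> sAR dRB; apply/'forall_forallP => a b; apply/implyP => aA; apply/implyP => bB.
have closed_R : closed (adj (bnd G R)) (mem R).
  move=> x y /existsP[e]; rewrite !inE.
  by case sR: (src e \in R); case tR: (tgt e \in R) => //= /orP[]/andP[/eqP<- /eqP<-];
    rewrite sR tR.
apply/negP => /(closed_connect closed_R).
by rewrite (subsetP sAR _ aA) (disjointFl dRB bB).
Qed.

Definition reach F A : {set V} := [set v | [exists a in A, connect (adj F) a v]].

Lemma sub_reach F A : A \subset reach F A.
Proof. by apply/subsetP => a aA; rewrite inE; apply/exists_inP; exists a. Qed.

Lemma reach_adj F A x y : adj F x y -> x \in reach F A -> y \in reach F A.
Proof.
move=> e_xy; rewrite !inE => /exists_inP[a aA c_ax]; apply/exists_inP.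
by exists a; rewrite // (connect_trans c_ax (connect1 e_xy)).
Qed.

Lemma disjoint_reach F A B : separates F A B -> [disjoint reach F A & B].
Proof.
move=> sepF; apply/disjointP => v; rewrite inE => /exists_inP[a aA c_av] vB.
by move: (forallP (forallP sepF a) v); rewrite aA vB c_av.
Qed.

Lemma bnd_reach F A : bnd G (reach F A) \subset F.
Proof.
apply/subsetP => e e_bnd; apply: contraT => /adj_notin/andP[st ts].
move: e_bnd; rewrite inE !in_setC => /orP[]/andP[] => [sR | sR' tR].
  by rewrite (reach_adj st sR).
by rewrite (reach_adj ts tR) in sR'.
Qed.

End Cuts.

Lemma leq_card_subsetDU (T : finType) (Y Z B E : {set T}) :
  E \subset B -> Y \subset (B :\: E) :|: Z -> #|Y| + #|E| <= #|B| + #|Z|.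
Proof.
move=> sEB sY; have := leq_trans (subset_leq_card sY) (leq_card_setU _ _).
by rewrite cardsDS //; have := subset_leq_card sEB; lia.
Qed.

Section Uncrossing.
Variables (V : finType) (G : multigraph V) (X R : {set V}).

Lemma E_G_sub_bnd : E_G G (X :&: R) (X :\: R) \subset bnd G R.
Proof.
apply/subsetP => e; rewrite !inE.
by case: (src e \in X); case: (src e \in R); case: (tgt e \in X); case: (tgt e \in R).
Qed.

Lemma card_bnd_setU :
  #|bnd G (R :|: X)| + #|E_G G (X :&: R) (X :\: R)|
    <= #|bnd G R| + #|bnd G (X :\: R) :&: bnd G X|.
Proof.
apply: leq_card_subsetDU; first exact: E_G_sub_bnd.
apply/subsetP => e; rewrite !inE.
by case: (src e \in X); case: (src e \in R); case: (tgt e \in X); case: (tgt e \in R).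
Qed.

Lemma card_bnd_setD :
  #|bnd G (R :\: X)| + #|E_G G (X :&: R) (X :\: R)|
    <= #|bnd G R| + #|bnd G (X :&: R) :&: bnd G X|.
Proof.
apply: leq_card_subsetDU; first exact: E_G_sub_bnd.
apply/subsetP => e; rewrite !inE.
by case: (src e \in X); case: (src e \in R); case: (tgt e \in X); case: (tgt e \in R).
Qed.

Lemma linked_uncross c :
  linked c G X ->
  minn (minn #|bnd G (R :|: X)| #|bnd G (R :\: X)|) c <= #|bnd G R|.
Proof.
move=> linkedX.
have dPQ : [disjoint X :&: R & X :\: R].
  by rewrite disjoint_subset; apply/subsetP => x; rewrite !inE => /andP[_ ->].
have := linkedX _ _ dPQ (setID X R).
have := subset_leq_card E_G_sub_bnd.
have := card_bnd_setU; have := card_bnd_setD; lia.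
Qed.

End Uncrossing.

Section Contraction.
Variables (V : finType) (G : multigraph V) (X : {set V}).
Implicit Types (A B R : {set V}).
Local Notation GX := (contract G X).

Lemma cmap_eq u v : cmap X u = cmap X v -> u = v \/ (u \in X /\ v \in X).
Proof.
rewrite /cmap; case: insubP => [u' uX <-|uX]; case: insubP => [v' vX <-|vX] //.
- by move=> [->]; left.
- by rewrite !negbK in uX vX; right.
Qed.

Lemma mem_imset_cmap R v :
  (X \subset R) || [disjoint X & R] -> (cmap X v \in cmap X @: R) = (v \in R).
Proof.
move=> unsplit; apply/imsetP/idP => [[u uR /esym/cmap_eq[<- // | [uX vX]]] | vR].
  by case/orP: unsplit => [/subsetP/(_ v vX) // | /disjointFr/(_ uX)]; rewrite uR.
by exists v.
Qed.

Lemma card_bnd_contract R :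
  (X \subset R) || [disjoint X & R] ->
  #|bnd GX (cmap X @: R)| <= #|bnd G R|.
Proof.
move=> unsplit; rewrite -(card_imset _ val_inj); apply/subset_leq_card/subsetP.
by move=> _ /imsetP[e + ->]; rewrite !inE /= !(mem_imset_cmap _ unsplit).
Qed.

Lemma mincut_contract_le A B R :
  (X \subset R) || [disjoint X & R] -> A \subset R -> [disjoint R & B] ->
  mincut GX (cmap X @: A) (cmap X @: B) <= #|bnd G R|.
Proof.
move=> unsplit sAR dRB; apply: leq_trans (card_bnd_contract unsplit).
apply/mincut_le/separates_bnd; first exact: imsetS.
apply/disjointP => _ /imsetP[v vR ->] /imsetP[b bB /cmap_eq[eq_vb | [vX bX]]].
  by rewrite eq_vb (disjointFl dRB bB) in vR.
case/orP: unsplit => [/subsetP/(_ b bX) | /disjointFr/(_ vX)].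
  by rewrite (disjointFl dRB bB).
by rewrite vR.
Qed.

Lemma lift_separates A B (F : {set cedge G X}) :
  separates (G := GX) F (cmap X @: A) (cmap X @: B) -> separates (val @: F) A B.
Proof.
move=> sepF; apply/'forall_forallP => a b; apply/implyP => aA; apply/implyP => bB.
have := forallP (forallP sepF (cmap X a)) (cmap X b); rewrite !imset_f //=.
apply: contra => /homo_connect; apply => u v /existsP[e /andP[eF end_e]].
have [/andP[uX vX] | e_out] := boolP ((src e \in X) && (tgt e \in X)).
  by case/orP: end_e uX vX => /andP[/eqP<- /eqP<-] *; rewrite /cmap !insubN ?negbK.
apply/connect1/existsP; exists (exist _ e e_out); rewrite /= andbC.
apply/andP; split; first by case/orP: end_e => /andP[/eqP<- /eqP<-]; rewrite !eqxx ?orbT.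
by apply: contra eF => eF; apply/imsetP; exists (exist _ e e_out).
Qed.

Lemma mincut_le_contract A B :
  [disjoint A & B] -> [disjoint X & A] ->
  mincut G A B <= mincut GX (cmap X @: A) (cmap X @: B).
Proof.
move=> dAB dXA; apply: mincut_ge => [|F sepF].
  apply/disjointP => _ /imsetP[a aA ->] /imsetP[b bB /cmap_eq[eq_ab | [aX _]]].
    by rewrite -eq_ab (disjointFr dAB aA) in bB.
  by rewrite (disjointFr dXA aX) in aA.
rewrite -(card_imset _ val_inj); exact/mincut_le/lift_separates.
Qed.

Lemma mincut_contract_ge c A B :
  linked c G X -> [disjoint A & B] -> [disjoint X & A] -> [disjoint X & B] ->
  minn (mincut GX (cmap X @: A) (cmap X @: B)) c <= mincut G A B.
Proof.
move=> linkedX dAB dXA dXB; apply: mincut_ge => // F sepF.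
set R := reach F A.
have sAR : A \subset R := sub_reach F A.
have dRB : [disjoint R & B] := disjoint_reach sepF.
have le_RX : mincut GX (cmap X @: A) (cmap X @: B) <= #|bnd G (R :|: X)|.
  apply: mincut_contract_le; first by rewrite subsetUr.
    exact: subset_trans sAR (subsetUl _ _).
  apply/disjointP => x; rewrite inE => /orP[] => [/(disjointFr dRB) | /(disjointFr dXB)];
  by move=> ->.
have le_R_X : mincut GX (cmap X @: A) (cmap X @: B) <= #|bnd G (R :\: X)|.
  apply: mincut_contract_le.
  - by apply/orP; right; apply/disjointP => x xX; rewrite inE xX.
  - by rewrite subsetD sAR disjoint_sym dXA.
  - exact: disjointWl (subsetDl R X) dRB.
have := linked_uncross R linkedX; have := subset_leq_card (bnd_reach F A).
rewrite -/R; lia.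
Qed.

End Contraction.

Theorem mainTheorem2 (V : finType) (G : multigraph V) (T X : {set V}) (c : nat) :
  1 <= c ->
  [disjoint X & T] ->
  linked c G X ->
  mimicking c G T (contract G X) (@cmap V X).
Proof.
move=> _ dXT linkedX; split.
  move=> a b aT _ /cmap_eq[// | [aX _]].
  by rewrite (disjointFr dXT aX) in aT.
move=> A B sAT sBT dAB.
have dXA : [disjoint X & A] := disjointWr sAT dXT.
have dXB : [disjoint X & B] := disjointWr sBT dXT.
have := mincut_le_contract G dAB dXA.
have := mincut_contract_ge linkedX dAB dXA dXB.
rewrite /mincutc; lia.
Qed.
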